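(* Let $R$ be a subring of $\mathbb{C}$ with field of fractions $K\subseteq\mathbb{C}$, suppose the transcendence degree of $K$ over $\mathbb{Q}$ is $k<\infty$, and let $t_1,\dots,t_k\in R$ be algebraically independent over $\mathbb{Q}$. Let $f\colon R\to\mathbb{C}$ be additive and such that $q=f/j$ (i.e. $x\mapsto f(x)/x$), as a map from the semigroup $R^*$ to $\mathbb{C}$, is a generalized polynomial. If $f=0$ on the multiplicative semigroup $G$ generated by $t_1,\dots,t_k$, then $f=0$ on $R$.
   Context: Subrings contain $1$; the multiplicative semigroup generated by $t_1,\dots,t_k$ consists of all monomials $t_1^{i_1}\cdots t_k^{i_k}$ with $i_1,\dots,i_k\ge 0$ (including $1$). $R^*$ is the semigroup $R\setminus\{0\}$ under multiplication. For $f$ on an abelian semigroup $G$, $\Delta_g f(x)=f(x\cdot g)-f(x)$; $f$ is a generalized polynomial if for some $m$, $\Delta_{g_1}\cdots\Delta_{g_{m+1}}f=0$ for all $g_1,\dots,g_{m+1}$ in the semigroup. *)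

From mathcomp Require Import all_boot all_algebra.
From mathcomp Require Import reals.
From mathcomp.real_closed Require Import complex.
From mathcomp Require Import mpoly.
Set Implicit Arguments. Unset Strict Implicit. Unset Printing Implicit Defensive.
Import GRing.Theory.
Local Open Scope ring_scope.

Section Defs.
Variable R : realType.
Local Notation C := (R[i]).

Definition is_subring (S : C -> Prop) : Prop :=
  S 1 /\ (forall x y, S x -> S y -> S (x - y)) /\ (forall x y, S x -> S y -> S (x * y)).

Definition frac_field (S : C -> Prop) : C -> Prop :=
  fun z => exists a b, S a /\ S b /\ b != 0 /\ z = a / b.

Definition qeval (k : nat) (t : 'I_k -> C) (p : {mpoly rat[k]}) : C := mmap ratr t p.

Definition alg_indep (k : nat) (t : 'I_k -> C) : Prop :=
  forall p : {mpoly rat[k]}, qeval t p = 0 -> p = 0.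

Definition Qfield (k : nat) (t : 'I_k -> C) : C -> Prop :=
  fun z => exists p q : {mpoly rat[k]}, qeval t q != 0 /\ z = qeval t p / qeval t q.

Definition algebraic_over (k : nat) (t : 'I_k -> C) (x : C) : Prop :=
  exists P : {poly C}, P != 0 /\ (forall i, Qfield t P`_i) /\ root P x.

Definition trans_basis (K : C -> Prop) (k : nat) (t : 'I_k -> C) : Prop :=
  (forall i, K (t i)) /\ alg_indep t /\ (forall x, K x -> algebraic_over t x).

Definition trdeg_eq (K : C -> Prop) (k : nat) : Prop :=
  exists t : 'I_k -> C, trans_basis K t.

(* Delta_{g_1} ... Delta_{g_n} h, with Delta_g h (x) = h (x g) - h x *)
Definition mdiff (gs : seq C) (h : C -> C) : C -> C :=
  foldr (fun g h' => fun x => h' (x * g) - h' x) h gs.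

(* h : S^* -> C is a generalized polynomial on the semigroup S^* = S \ {0} *)
Definition gen_poly_on_units (S : C -> Prop) (h : C -> C) : Prop :=
  exists m : nat, forall gs : seq C, size gs = m.+1 ->
    (forall g, g \in gs -> S g /\ g != 0) ->
    forall x, S x -> x != 0 -> mdiff gs h x = 0.

End Defs.

From mathcomp Require Import all_boot all_algebra.
From mathcomp Require Import reals.
From mathcomp.real_closed Require Import complex.
From mathcomp Require Import mpoly.
From mathcomp Require Import ring zify.
Set Implicit Arguments. Unset Strict Implicit. Unset Printing Implicit Defensive.
Import GRing.Theory Num.Theory.
Local Open Scope ring_scope.

(* Write q x = f x / x and let G be the semigroup of monomials in t.  For g
   in G the additive map y |-> f (y g) - g f y has quotient
   y |-> g (q (y g) - q y), a generalized polynomial of lower degree, and it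
   vanishes on G; by induction on the degree it vanishes on the whole ring.
   The same induction applied to y |-> f (y a) - a f y - f a y shows that f
   is a derivation.  A derivation vanishing on G vanishes at every root x of
   a nonzero polynomial p with coefficients in the Z-span of G, because
   differentiating p(x) = 0 gives p'(x) f(x) = 0.  Every element x of the
   ring is such a root: x, t_1, ..., t_k are k + 1 elements algebraic over
   Q(s_1, ..., s_k) for a transcendence basis s, hence algebraically
   dependent over Q, and as t is algebraically independent the relation
   involves x. *)

Definition vanishes_on (T : Type) (V : nmodType) (P : T -> Prop) (f : T -> V) :=
  forall x, P x -> f x = 0.

Section Subring.
Variables (R : realType) (S : R[i] -> Prop).
Local Notation C := R[i].
Hypothesis hS : is_subring S.

Lemma subring1 : S 1. Proof. by case: hS. Qed.
Lemma subringB x y : S x -> S y -> S (x - y). Proof. by case: hS => _ [+ _]; apply. Qed.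
Lemma subringM x y : S x -> S y -> S (x * y). Proof. by case: hS => _ [_]; apply. Qed.
Lemma subring0 : S 0. Proof. by rewrite -(subrr 1); apply: subringB; apply: subring1. Qed.

Lemma subringN x : S x -> S (- x).
Proof. by move=> Sx; rewrite -sub0r; apply: subringB => //; apply: subring0. Qed.

Lemma subringD x y : S x -> S y -> S (x + y).
Proof. by move=> Sx Sy; rewrite -[y]opprK; apply: subringB => //; apply: subringN. Qed.

Lemma subringMn x n : S x -> S (x *+ n).
Proof.
move=> Sx; elim: n => [|n IH]; first by rewrite mulr0n; apply: subring0.
by rewrite mulrS; apply: subringD.
Qed.

Lemma subringMz x (z : int) : S x -> S (x *~ z).
Proof.
by move=> Sx; case: z => n; rewrite ?NegzE ?mulrNz; [|apply: subringN]; apply: subringMn.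
Qed.

Lemma subringX x n : S x -> S (x ^+ n).
Proof.
move=> Sx; elim: n => [|n IH]; first by rewrite expr0; apply: subring1.
by rewrite exprS; apply: subringM.
Qed.

Lemma subring_sum (I : eqType) (s : seq I) (F : I -> C) :
  (forall i, i \in s -> S (F i)) -> S (\sum_(i <- s) F i).
Proof.
move=> SF; rewrite big_seq; elim/big_rec: _ => [|i z si Sz]; first exact: subring0.
by apply: subringD => //; apply: SF.
Qed.

Lemma subring_prod (I : Type) (s : seq I) (F : I -> C) :
  (forall i, S (F i)) -> S (\prod_(i <- s) F i).
Proof.
move=> SF; elim/big_rec: _ => [|i z _ Sz]; first exact: subring1.
exact: subringM.
Qed.

Lemma subring_frac_field x : S x -> frac_field S x.
Proof.
by move=> Sx; exists x, 1; rewrite divr1 oner_neq0; split=> //; split=> //; apply: subring1.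
Qed.

Definition additive_on (f : C -> C) := forall x y, S x -> S y -> f (x + y) = f x + f y.

Definition derivation_on (f : C -> C) :=
  forall x y, S x -> S y -> f (x * y) = f x * y + x * f y.

Section Additive.
Variable f : C -> C.
Hypothesis hf : additive_on f.

Lemma addf0 : f 0 = 0.
Proof. by apply: (addrI (f 0)); rewrite -hf ?addr0 //; apply: subring0. Qed.

Lemma addfN x : S x -> f (- x) = - f x.
Proof. by move=> Sx; apply: (addrI (f x)); rewrite -hf ?subrr ?addf0 //; apply: subringN. Qed.

Lemma addfMn x n : S x -> f (x *+ n) = f x *+ n.
Proof.
move=> Sx; elim: n => [|n IH]; first by rewrite !mulr0n addf0.
by rewrite !mulrS hf ?IH //; apply: subringMn.
Qed.

Lemma addfMz x (z : int) : S x -> f (x *~ z) = f x *~ z.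
Proof.
move=> Sx; case: z => n; first exact: addfMn.
by rewrite NegzE !mulrNz addfN ?addfMn //; apply: subringMn.
Qed.

Lemma addf_sum (I : eqType) (s : seq I) (F : I -> C) :
  (forall i, i \in s -> S (F i)) -> f (\sum_(i <- s) F i) = \sum_(i <- s) f (F i).
Proof.
elim: s => [|a s IH] SF; first by rewrite !big_nil addf0.
have SFs i : i \in s -> S (F i) by move=> si; apply: SF; rewrite inE si orbT.
by rewrite !big_cons (hf (SF a (mem_head _ _)) (subring_sum SFs)) IH.
Qed.

End Additive.

Lemma eq_in_mdiff gs (h1 h2 : C -> C) :
  (forall y, S y -> y != 0 -> h1 y = h2 y) ->
  (forall g, g \in gs -> S g /\ g != 0) ->
  forall x, S x -> x != 0 -> mdiff gs h1 x = mdiff gs h2 x.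
Proof.
move=> h12; elim: gs => [|g gs IH] Sgs x Sx x0 /=; first exact: h12.
have Sgs' g' : g' \in gs -> S g' /\ g' != 0 by move=> g'gs; apply: Sgs; rewrite inE g'gs orbT.
have [Sg g0] := Sgs g (mem_head _ _).
by rewrite (IH Sgs' (x * g) (subringM Sx Sg) (mulf_neq0 x0 g0)) (IH Sgs' x Sx x0).
Qed.

(* [gen_poly_on_units S h] unfolds to [exists m, gen_poly_deg S m h]. *)
Definition gen_poly_deg (m : nat) (h : C -> C) :=
  forall gs : seq C, size gs = m.+1 ->
    (forall g, g \in gs -> S g /\ g != 0) ->
    forall x, S x -> x != 0 -> mdiff gs h x = 0.

Lemma gen_poly_deg_eq_in m (h1 h2 : C -> C) :
  (forall y, S y -> y != 0 -> h1 y = h2 y) -> gen_poly_deg m h1 -> gen_poly_deg m h2.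
Proof.
by move=> h12 h1m gs szgs Sgs x Sx x0; rewrite -(eq_in_mdiff h12) // h1m.
Qed.

End Subring.

Section Mdiff.
Variable R : realType.
Local Notation C := R[i].
Implicit Types (gs : seq C) (g c : C) (h : C -> C).

Lemma mdiff_rcons gs g h : mdiff (rcons gs g) h = mdiff gs (fun x => h (x * g) - h x).
Proof. by rewrite /mdiff foldr_rcons. Qed.

Lemma mdiffMl gs c h x : mdiff gs (fun y => c * h y) x = c * mdiff gs h x.
Proof. by elim: gs x => [|g gs IH] x //=; rewrite !IH mulrBr. Qed.

Lemma mdiffDc gs c h x : gs != [::] -> mdiff gs (fun y => h y + c) x = mdiff gs h x.
Proof.
have shift y : mdiff gs (fun y => h y + c) y = mdiff gs h y + (if gs is [::] then c else 0).
  elim: gs y => [|g gs IH] y //=; rewrite !IH.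
  by case: gs {IH} => [|g' gs']; rewrite ?addr0 // opprD addrACA subrr addr0.
by rewrite shift; case: gs {shift} => // g gs _; rewrite addr0.
Qed.

Variable S : C -> Prop.
Hypothesis hS : is_subring S.

Lemma gen_poly_degMl m c h : gen_poly_deg S m h -> gen_poly_deg S m (fun y => c * h y).
Proof. by move=> hm gs szgs Sgs x Sx x0; rewrite mdiffMl hm ?mulr0. Qed.

Lemma gen_poly_degDc m c h : gen_poly_deg S m h -> gen_poly_deg S m (fun y => h y + c).
Proof. by move=> hm gs szgs Sgs x Sx x0; rewrite mdiffDc ?hm // -size_eq0 szgs. Qed.

Lemma gen_poly_deg_diff m a h : S a -> a != 0 ->
  gen_poly_deg S m.+1 h -> gen_poly_deg S m (fun y => h (y * a) - h y).
Proof.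
move=> Sa a0 hm gs szgs Sgs x Sx x0; rewrite -mdiff_rcons hm ?size_rcons ?szgs //.
by move=> g; rewrite mem_rcons inE => /orP [/eqP -> | /Sgs].
Qed.

Lemma gen_poly_deg0 h x : gen_poly_deg S 0 h -> S x -> x != 0 -> h x = h 1.
Proof.
move=> h0 Sx x0; have Sxs g : g \in [:: x] -> S g /\ g != 0 by rewrite inE => /eqP ->.
have := h0 [:: x] erefl Sxs 1 (subring1 hS) (oner_neq0 _); rewrite /= mul1r => /eqP.
by rewrite subr_eq0 => /eqP.
Qed.

End Mdiff.

Section ReductionToDerivations.
Variables (R : realType) (S G : R[i] -> Prop).
Local Notation C := R[i].
Hypothesis hS : is_subring S.
Hypotheses (G1 : G 1) (GM : forall x y, G x -> G y -> G (x * y)).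
Hypotheses (GS : forall x, G x -> S x) (G0 : forall x, G x -> x != 0).

Section InductionStep.
Variable m : nat.
Hypothesis IH : forall f, additive_on S f -> gen_poly_deg S m (fun x => f x / x) ->
  vanishes_on G f -> vanishes_on S f.
Variable f : C -> C.
Hypotheses (hf : additive_on S f) (hq : gen_poly_deg S m.+1 (fun x => f x / x)).
Hypothesis hG : vanishes_on G f.

Lemma additive_on_dilate a : S a -> additive_on S (fun y => f (y * a) - a * f y).
Proof.
move=> Sa u v Su Sv.
by rewrite mulrDl (hf (subringM hS Su Sa) (subringM hS Sv Sa)) (hf Su Sv); ring.
Qed.

Lemma gen_poly_dilate a : S a -> a != 0 ->
  gen_poly_deg S m (fun y => (f (y * a) - a * f y) / y).
Proof.
move=> Sa a0.
apply: (gen_poly_deg_eq_in hS (h1 := fun y => a * (f (y * a) / (y * a) - f y / y))).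
  by move=> y _ y0; field; rewrite y0 a0.
by apply/gen_poly_degMl/(gen_poly_deg_diff (h := fun x => f x / x)).
Qed.

Lemma homogeneous_G g y : G g -> S y -> f (y * g) = g * f y.
Proof.
move=> Gg Sy; have [Sg g0] := (GS Gg, G0 Gg).
suff vanish : vanishes_on S (fun y => f (y * g) - g * f y).
  by move: (vanish y Sy) => /= /eqP; rewrite subr_eq0 => /eqP.
apply: IH; [exact: additive_on_dilate | exact: gen_poly_dilate |].
by move=> a Ga /=; rewrite !hG ?mulr0 ?subr0 //; apply: GM.
Qed.

Lemma derivation_of_gen_poly : derivation_on S f.
Proof.
move=> a y Sa Sy; have [->|a0] := eqVneq a 0.
  by rewrite !mul0r (addf0 hS hf) mul0r add0r.
suff vanish : vanishes_on S (fun y => f (y * a) - a * f y - f a * y).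
  move: (vanish y Sy) => /= /eqP; rewrite [a * y]mulrC -addrA -opprD subr_eq0 addrC => /eqP.
  by rewrite [a * f y]mulrC.
apply: IH.
- move=> u v Su Sv.
  by rewrite mulrDl (hf (subringM hS Su Sa) (subringM hS Sv Sa)) (hf Su Sv); ring.
- apply: (gen_poly_deg_eq_in hS
    (h1 := fun y => a * (f (y * a) / (y * a) - f y / y) + - f a)).
    by move=> z _ z0; field; rewrite z0 a0.
  by apply/gen_poly_degDc/gen_poly_degMl/(gen_poly_deg_diff (h := fun x => f x / x)).
- by move=> g Gg /=; rewrite [g * a]mulrC homogeneous_G // (hG Gg) mulr0 subr0 mulrC subrr.
Qed.

End InductionStep.

Hypothesis derivation_vanishes : forall f, additive_on S f -> derivation_on S f ->
  vanishes_on G f -> vanishes_on S f.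

Lemma gen_poly_additive_vanishes m f : additive_on S f ->
  gen_poly_deg S m (fun x => f x / x) -> vanishes_on G f -> vanishes_on S f.
Proof.
elim: m f => [|m IH] f hf hq hG.
  move=> x Sx; have [->|x0] := eqVneq x 0; first exact: (addf0 hS hf).
  have := gen_poly_deg0 hS hq Sx x0; rewrite /= (hG 1 G1) mul0r => /eqP.
  by rewrite mulf_eq0 invr_eq0 (negbTE x0) orbF => /eqP.
by apply: derivation_vanishes hf (derivation_of_gen_poly IH hf hq hG) hG.
Qed.

End ReductionToDerivations.

Lemma deriv_neq0 (R : numDomainType) (p : {poly R}) : (1 < size p)%N -> p^`() != 0.
Proof.
move=> p_gt1; have [n szp] : exists n, size p = n.+2.
  by exists (size p).-2; case: (size p) p_gt1 => [|[|]].
apply/eqP => /(congr1 (fun q : {poly R} => q`_n)) /eqP.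
rewrite coef_deriv coef0 mulrn_eq0 /= -[p`_n.+1]/(p`_(n.+2).-1) -szp -lead_coefE.
by rewrite lead_coef_eq0 -size_poly_eq0 szp.
Qed.

Definition zspan (V : zmodType) (M : V -> Prop) (z : V) := exists s : seq (int * V),
  (forall q, q \in s -> M q.2) /\ z = \sum_(q <- s) q.2 *~ q.1.

Section Derivation.
Variables (R : realType) (S : R[i] -> Prop) (f : R[i] -> R[i]).
Local Notation C := R[i].
Hypotheses (hS : is_subring S) (hf : additive_on S f) (hd : derivation_on S f).

Definition constant (z : C) := S z /\ f z = 0.

Lemma derivation_horner x (p : {poly C}) : S x -> (forall i, constant p`_i) ->
  S p.[x] /\ f p.[x] = p^`().[x] * f x.
Proof.
move=> Sx; elim/poly_ind: p => [|p c IH] cp.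
  by rewrite horner0 deriv0 horner0 mul0r (addf0 hS hf); split=> //; apply: subring0.
have [Sp fp] : S p.[x] /\ f p.[x] = p^`().[x] * f x.
  by apply: IH => i; have := cp i.+1; rewrite coefD coefMX coefC /= addr0.
have [Sc fc] : constant c by have := cp 0%N; rewrite coefD coefMX coefC /= add0r.
rewrite hornerMXaddC derivMXaddC hornerD hornerMX; split.
  by apply: subringD => //; apply: subringM.
by rewrite (hf (subringM hS Sp Sx) Sc) fc addr0 (hd Sp Sx) fp; ring.
Qed.

Lemma derivation_root x (p : {poly C}) : S x -> p != 0 -> (forall i, constant p`_i) ->
  root p x -> f x = 0.
Proof.
move=> Sx; have [//|fx0] := eqVneq (f x) 0.
have [n] := ubnP (size p); elim: n p => // n IH p szp p0 cp rp.
apply: (IH p^`()); first exact: leq_trans (lt_size_deriv p0) _.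
- exact/deriv_neq0/(root_size_gt1 p0 rp).
- move=> i; rewrite coef_deriv; have [Sc fc] := cp i.+1.
  by split; [apply: subringMn | rewrite (addfMn hS hf _ Sc) fc mul0rn].
- have [_] := derivation_horner Sx cp; rewrite (rootP rp) (addf0 hS hf) => /esym/eqP.
  by rewrite mulf_eq0 (negbTE fx0) orbF.
Qed.

Lemma derivation_vanishes_int_roots (G : C -> Prop) :
  (forall g, G g -> S g) -> vanishes_on G f -> forall x, S x ->
  (exists p : {poly C}, p != 0 /\ (forall i, zspan G p`_i) /\ root p x) -> f x = 0.
Proof.
move=> GS hG x Sx [p [p0 [Gp rp]]]; apply: (derivation_root Sx p0 _ rp) => i.
have [s [sG ->]] := Gp i; have SGs q : q \in s -> S (q.2 *~ q.1).
  by move=> qs; apply/(subringMz hS)/GS/sG.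
split; first exact: subring_sum.
rewrite (addf_sum hS hf SGs) big_seq big1 // => q qs.
by rewrite (addfMz hS hf _ (GS _ (sG q qs))) (hG _ (sG q qs)) mul0rz.
Qed.

End Derivation.

Lemma left_kernel_neq0 (K : fieldType) m n (M : 'M[K]_(m, n)) : (n < m)%N ->
  exists2 u : 'rV_m, u *m M = 0 & exists i, u 0 i != 0.
Proof.
move=> lt_nm; have /rowV0Pn [u /sub_kermxP uM /rV0Pn u0] : kermx M != 0.
  by rewrite kermx_eq0 -row_leq_rank -ltnNge (leq_ltn_trans (rank_leq_col M)).
by exists u.
Qed.

Lemma common_denominator (s : seq rat) :
  exists2 D : int, D != 0 & forall q, q \in s -> exists z : int, q * D%:~R = z%:~R.
Proof.
elim: s => [|q0 s [D D0 sD]]; first by exists 1.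
exists (D * denq q0); first by rewrite mulf_neq0 ?denq_neq0.
move=> q; rewrite inE => /orP [/eqP -> | qs].
  by exists (numq q0 * D); rewrite !intrM numqE; ring.
by have [z qz] := sD q qs; exists (z * denq q0); rewrite !intrM mulrA qz.
Qed.

Section RationalSpan.
Variable F : numFieldType.
Implicit Types (M : F -> Prop) (z g : F).

Definition qspan M z := exists s : seq (rat * F),
  (forall q, q \in s -> M q.2) /\ z = \sum_(q <- s) ratr q.1 * q.2.

Lemma qspan_gen M g : M g -> qspan M g.
Proof.
move=> Mg; exists [:: (1, g)]; split; last by rewrite big_seq1 rmorph1 mul1r.
by move=> q; rewrite inE => /eqP ->.
Qed.

Lemma qspan0 M : qspan M 0.
Proof. by exists [::]; rewrite big_nil. Qed.

Lemma qspanD M z1 z2 : qspan M z1 -> qspan M z2 -> qspan M (z1 + z2).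
Proof.
move=> [s1 [M1 ->]] [s2 [M2 ->]]; exists (s1 ++ s2); rewrite big_cat; split=> // q.
by rewrite mem_cat => /orP [/M1 | /M2].
Qed.

Lemma qspanZ M c z : qspan M z -> qspan M (ratr c * z).
Proof.
move=> [s [Ms ->]]; exists [seq (c * q.1, q.2) | q <- s]; split.
  by move=> _ /mapP [q /Ms Mq ->].
by rewrite big_map mulr_sumr; apply: eq_bigr => q _; rewrite rmorphM mulrA.
Qed.

Lemma qspanN M z : qspan M z -> qspan M (- z).
Proof. by rewrite -mulN1r -(rmorphN1 (ratr : rat -> F)); apply: qspanZ. Qed.

Lemma qspan_sum M (I : eqType) (r : seq I) (F' : I -> F) :
  (forall i, i \in r -> qspan M (F' i)) -> qspan M (\sum_(i <- r) F' i).
Proof.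
move=> MF; rewrite big_seq; elim/big_rec: _ => [|i z ri Mz]; first exact: qspan0.
by apply: qspanD => //; apply: MF.
Qed.

Lemma qspan_sub M1 M2 z : (forall g, M1 g -> qspan M2 g) -> qspan M1 z -> qspan M2 z.
Proof. by move=> M12 [s [Ms ->]]; apply: qspan_sum => q qs; apply/qspanZ/M12/Ms. Qed.

Lemma qspanM M1 M2 M3 z1 z2 : qspan M1 z1 -> qspan M2 z2 ->
  (forall g1 g2, M1 g1 -> M2 g2 -> qspan M3 (g1 * g2)) -> qspan M3 (z1 * z2).
Proof.
move=> [s1 [M1s ->]] [s2 [M2s ->]] M123; rewrite mulr_suml; apply: qspan_sum => q1 q1s.
rewrite mulr_sumr; apply: qspan_sum => q2 q2s.
have -> : ratr q1.1 * q1.2 * (ratr q2.1 * q2.2) = ratr (q1.1 * q2.1) * (q1.2 * q2.2) :> F.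
  by rewrite rmorphM; ring.
by apply/qspanZ/M123; [apply: M1s | apply: M2s].
Qed.

Lemma qspan_coords (J : finType) (w : J -> F) M z :
  (forall g, M g -> exists j, g = w j) -> qspan M z ->
  exists lam : J -> rat, z = \sum_j ratr (lam j) * w j.
Proof.
move=> Mw [s [Ms ->]]; elim: s Ms => [|q s IH] Ms.
  by exists (fun=> 0); rewrite big_nil big1 // => j _; rewrite rmorph0 mul0r.
rewrite big_cons; have [lam ->] := IH (fun q' q's => Ms q' (mem_behead (s := q :: s) q's)).
have [j0 ->] := Mw _ (Ms q (mem_head _ _)).
exists (fun j => lam j + (if j == j0 then q.1 else 0)).
under [RHS]eq_bigr do rewrite rmorphD mulrDl.
rewrite big_split /= addrC; congr (_ + _).
rewrite (bigD1 j0) //= eqxx big1 ?addr0 // => j /negbTE ->.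
by rewrite rmorph0 mul0r.
Qed.

Lemma qrelation_of_card_lt (I J : finType) (v : I -> F) (w : J -> F) (lam : I -> J -> rat) :
  (forall i, v i = \sum_j ratr (lam i j) * w j) -> (#|J| < #|I|)%N ->
  exists2 mu : I -> rat, (exists i, mu i != 0) & \sum_i ratr (mu i) * v i = 0.
Proof.
move=> vw ltJI.
pose M : 'M[rat]_(#|I|, #|J|) := \matrix_(r, s) lam (enum_val r) (enum_val s).
have [u uM [r0 ur0]] := left_kernel_neq0 M ltJI.
exists (fun i => u 0 (enum_rank i)); first by exists (enum_val r0); rewrite enum_valK.
under eq_bigr do rewrite vw mulr_sumr.
rewrite exchange_big big1 // => j _; under eq_bigr do rewrite mulrA.
rewrite -mulr_suml.
have -> : \sum_i ratr (u 0 (enum_rank i)) * ratr (lam i j) =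
    ratr ((u *m M) 0 (enum_rank j)) :> F.
  rewrite mxE rmorph_sum (reindex (fun r : 'I_#|I| => enum_val r)) /=; last first.
    exact/onW_bij/enum_val_bij.
  by apply: eq_bigr => r _; rewrite enum_valK rmorphM mxE enum_rankK.
by rewrite uM mxE rmorph0 mul0r.
Qed.

Lemma zrelation_of_qrelation (I : finType) (u : I -> F) (mu : I -> rat) :
  (exists i, mu i != 0) -> \sum_i ratr (mu i) * u i = 0 ->
  exists2 z : I -> int, (exists i, z i != 0) & \sum_i u i *~ z i = 0.
Proof.
move=> [i0 mui0] mu_rel.
have [D D0 D_clears] := common_denominator [seq mu i | i <- enum I].
have /fin_all_exists [z muz] i : exists z : int, mu i * D%:~R = z%:~R.
  by apply: D_clears; apply: map_f; rewrite mem_enum.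
exists z.
  exists i0; apply/eqP => zi0; move: (muz i0); rewrite zi0 mulr0z => /eqP.
  by rewrite mulf_eq0 (negbTE mui0) intr_eq0 (negbTE D0).
have -> : \sum_i u i *~ z i = D%:~R * \sum_i ratr (mu i) * u i.
  rewrite mulr_sumr; apply: eq_bigr => i _; rewrite -mulrzl.
  by rewrite -[(z i)%:~R](rmorph_int (ratr : rat -> F)) -muz rmorphM rmorph_int; ring.
by rewrite mu_rel mulr0.
Qed.

End RationalSpan.

Lemma monomial_count_lt k nY E B N : (k < nY)%N -> N = ((nY * E).+1 ^ k * B.+1 ^ nY)%N ->
  ((nY * (E * N)).+1 ^ k * B.+1 ^ nY < N.+1 ^ nY)%N.
Proof.
move=> kY defN; have NkN : ((nY * (E * N)).+1 ^ k <= (nY * E).+1 ^ k * N.+1 ^ k)%N.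
  rewrite -expnMn; have [->|k_gt0] := posnP k; first by rewrite !expn0.
  by rewrite leq_exp2r //; nia.
apply: (@leq_ltn_trans ((nY * E).+1 ^ k * N.+1 ^ k * B.+1 ^ nY)).
  by rewrite leq_mul2r NkN orbT.
apply: (@leq_trans (N.+1 ^ k.+1)); last exact: leq_pexp2l.
by rewrite mulnAC -defN expnS ltn_mul2r ltnSn expn_gt0.
Qed.

Section MonomialSpan.
Variables (F : numFieldType) (k : nat) (tp : 'I_k -> F) (Y : finType) (ys : Y -> F).

Definition monomial (e : 'I_k -> nat) (b : Y -> nat) : F :=
  (\prod_j tp j ^+ e j) * \prod_o ys o ^+ b o.

Definition bounded_monomial (A : nat) (B : Y -> nat) (g : F) :=
  exists e b, [/\ forall j, (e j <= A)%N, forall o, (b o <= B o)%N & g = monomial e b].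

Definition mspan A B := qspan (bounded_monomial A B).

Lemma monomialM e b e' b' :
  monomial e b * monomial e' b' = monomial (fun j => e j + e' j)%N (fun o => b o + b' o)%N.
Proof.
rewrite /monomial mulrACA -!big_split.
by congr (_ * _); apply: eq_bigr => i _; rewrite exprD.
Qed.

Lemma mspanM A B A' B' z z' : mspan A B z -> mspan A' B' z' ->
  mspan (A + A') (fun o => B o + B' o)%N (z * z').
Proof.
move=> Bz B'z'; apply: (qspanM Bz B'z') => _ _ [e [b [he hb ->]]] [e' [b' [he' hb' ->]]].
rewrite monomialM; apply: qspan_gen; exists (fun j => e j + e' j)%N, (fun o => b o + b' o)%N.
by split=> // [j | o]; apply: leq_add.
Qed.

Lemma mspanW A B A' B' z : (A <= A')%N -> (forall o, B o <= B' o)%N ->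
  mspan A B z -> mspan A' B' z.
Proof.
move=> hA hB; apply: qspan_sub => _ [e [b [he hb ->]]]; apply: qspan_gen; exists e, b.
by split=> // [j | o]; [exact: leq_trans (he j) hA | exact: leq_trans (hb o) (hB o)].
Qed.

Lemma mspan1 A B : mspan A B 1.
Proof.
apply: qspan_gen; exists (fun=> 0%N), (fun=> 0%N); split=> //.
by rewrite /monomial !big1 ?mulr1 // => i _; rewrite expr0.
Qed.

Lemma mspanX A c n : mspan A (fun=> 0%N) c -> mspan (A * n) (fun=> 0%N) (c ^+ n).
Proof.
move=> Ac; elim: n => [|n IH]; first by rewrite expr0; apply: mspan1.
by rewrite exprS mulnS; apply: mspanW (mspanM Ac IH).
Qed.

Lemma mspan_tp A B e : (forall j, e j <= A)%N -> mspan A B (\prod_j tp j ^+ e j).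
Proof.
move=> he; apply: qspan_gen; exists e, (fun=> 0%N); split=> //.
by rewrite /monomial [X in _ * X]big1 ?mulr1 // => o _; rewrite expr0.
Qed.

Definition bound_at (o : Y) (l : nat) : Y -> nat := fun o' => if o' == o then l else 0%N.

Lemma monomial_bound_at e o l :
  monomial e (bound_at o l) = (\prod_j tp j ^+ e j) * ys o ^+ l.
Proof.
rewrite /monomial (bigD1 o) //= /bound_at eqxx [X in _ * (_ * X)]big1 ?mulr1 //.
by move=> o' /negbTE ->; rewrite expr0.
Qed.

Lemma monomial_at e b o n : (forall o', b o' <= bound_at o n o')%N ->
  monomial e b = (\prod_j tp j ^+ e j) * ys o ^+ b o.
Proof.
move=> hb; rewrite -monomial_bound_at /monomial; congr (_ * _); apply: eq_bigr => o' _.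
rewrite /bound_at; case: eqP => [-> // | /eqP ne].
by have := hb o'; rewrite /bound_at (negbTE ne) leqn0 => /eqP ->.
Qed.

Lemma mspan_ys A B o l : (l <= B o)%N -> mspan A B (ys o ^+ l).
Proof.
move=> hl; apply: qspan_gen; exists (fun=> 0%N), (bound_at o l); split=> //.
  by move=> o'; rewrite /bound_at; case: eqP => [-> |].
by rewrite monomial_bound_at big1 ?mul1r // => j _; rewrite expr0.
Qed.

Section LeadPower.
Variables (o : Y) (p : {poly F}) (n E : nat).
Hypotheses (szp : size p = n.+2) (rp : root p (ys o)).
Hypothesis Ep : forall i, mspan E (fun=> 0%N) p`_i.

Lemma mspan_lead_root : mspan E (bound_at o n) (lead_coef p * ys o ^+ n.+1).
Proof.
have : \sum_(i < size p) p`_i * ys o ^+ i = 0 by rewrite -horner_coef; apply/rootP.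
rewrite lead_coefE szp big_ord_recr /= addrC => /eqP; rewrite addr_eq0 => /eqP ->.
apply/qspanN/qspan_sum => i _.
have yi : mspan 0 (bound_at o n) (ys o ^+ i).
  by apply: mspan_ys; rewrite /bound_at eqxx -ltnS.
by apply: mspanW (mspanM (Ep i) yi); rewrite ?addn0.
Qed.

Lemma mspan_mul_lead_root A z : mspan A (bound_at o n) z ->
  mspan (A + E) (bound_at o n) (z * (lead_coef p * ys o)).
Proof.
move=> Az; have cy : qspan (fun g => g = lead_coef p * ys o) (lead_coef p * ys o).
  exact: qspan_gen.
apply: (qspanM Az cy) => _ _ [e [b [he hb ->]]] ->; rewrite (monomial_at e hb).
have tpe : mspan A (fun=> 0%N) (\prod_j tp j ^+ e j) by apply: mspan_tp.
have [lt_bn | ge_bn] := ltnP (b o) n.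
  have -> : (\prod_j tp j ^+ e j) * ys o ^+ b o * (lead_coef p * ys o) =
      (\prod_j tp j ^+ e j) * lead_coef p * ys o ^+ (b o).+1 by rewrite exprS; ring.
  have yb : mspan 0 (bound_at o n) (ys o ^+ (b o).+1) by apply: mspan_ys; rewrite /bound_at eqxx.
  have Ec : mspan E (fun=> 0%N) (lead_coef p) by rewrite lead_coefE szp; apply: Ep.
  by apply: mspanW (mspanM (mspanM tpe Ec) yb); rewrite ?addn0.
have -> : b o = n by apply/eqP; rewrite eqn_leq ge_bn andbT; have := hb o; rewrite /bound_at eqxx.
have -> : (\prod_j tp j ^+ e j) * ys o ^+ n * (lead_coef p * ys o) =
    (\prod_j tp j ^+ e j) * (lead_coef p * ys o ^+ n.+1) by rewrite exprS; ring.
exact: mspanW (mspanM tpe mspan_lead_root).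
Qed.

(* [lead_coef p * ys o] is integral over the span of the coefficients, so its
   powers only need exponents of [ys o] below the degree of [p]. *)
Lemma mspan_lead_power b : mspan (E * b) (bound_at o n) ((lead_coef p * ys o) ^+ b).
Proof.
elim: b => [|b IH]; first by rewrite expr0; apply: mspan1.
by rewrite exprSr mulnSr; apply: mspan_mul_lead_root.
Qed.

End LeadPower.

Definition alg_rel (E D : nat) (y : F) := exists p : {poly F},
  [/\ p != 0, root p y, (size p <= D.+2)%N & forall i, mspan E (fun=> 0%N) p`_i].

Lemma alg_relW E D E' D' y : (E <= E')%N -> (D <= D')%N -> alg_rel E D y -> alg_rel E' D' y.
Proof.
move=> hE hD [p [p0 rp szp Ep]]; exists p; split=> // [|i].
  by apply: leq_trans szp _; rewrite !ltnS.
exact: mspanW (Ep i).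
Qed.

Lemma alg_rel_uniform : (forall o, exists E D, alg_rel E D (ys o)) ->
  exists E D, forall o, alg_rel E D (ys o).
Proof.
move=> ys_alg; have : forall o, exists ED : nat * nat, alg_rel ED.1 ED.2 (ys o).
  by move=> o; have [E [D ys_algED]] := ys_alg o; exists (E, D).
move=> /fin_all_exists [ED ys_algED].
exists (\max_o (ED o).1), (\max_o (ED o).2) => o; apply: alg_relW (ys_algED o).
  exact: (leq_bigmax (F := fun o => (ED o).1)).
exact: (leq_bigmax (F := fun o => (ED o).2)).
Qed.

Lemma mspan_scaled_products E D N : (forall o, alg_rel E D (ys o)) ->
  forall s : seq Y, exists2 c : F, c != 0 & forall b : Y -> nat, (forall o, b o <= N)%N ->
    mspan (size s * (E * N)) (fun=> size s * D)%N (c * \prod_(o <- s) ys o ^+ b o).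
Proof.
move=> ys_alg; elim=> [|o s [c' c'0 IH]].
  by exists 1 => [|b _]; rewrite ?oner_neq0 // big_nil mulr1; apply: mspan1.
have [p [p0 rp szp Ep]] := ys_alg o.
have [n szn] : exists n, size p = n.+2.
  by exists (size p).-2; case: (size p) (root_size_gt1 p0 rp) => [|[|]].
have nD : (n <= D)%N by rewrite -2!ltnS -szn.
have Ec : mspan E (fun=> 0%N) (lead_coef p) by rewrite lead_coefE; apply: Ep.
exists (lead_coef p ^+ N * c') => [|b bN].
  by rewrite mulf_neq0 // expf_neq0 // lead_coef_eq0.
have -> : lead_coef p ^+ N * c' * \prod_(o' <- o :: s) ys o' ^+ b o' =
    lead_coef p ^+ (N - b o) * (lead_coef p * ys o) ^+ b o *
    (c' * \prod_(o' <- s) ys o' ^+ b o').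
  by rewrite big_cons exprMn -{1}(subnK (bN o)) exprD; ring.
apply: mspanW (mspanM (mspanM (mspanX (N - b o) Ec) (mspan_lead_power szn rp Ep (b o)))
  (IH b bN)) => [|o'].
  by rewrite /= -mulnDr subnK // mulSn.
by rewrite /= add0n mulSn leq_add2r /bound_at; case: eqP.
Qed.

(* Dimension count: the [(N + 1) ^ #|Y|] products [c * \prod_o ys o ^+ b o]
   lie in the span of at most [(A + 1) ^ k * (B + 1) ^ #|Y|] monomials, where
   [A] is linear in [N] and [B] does not depend on [N]; with [k < #|Y|] and
   [N] large the products are linearly dependent. *)
Lemma ys_int_relation : (k < #|Y|)%N -> (forall o, exists E D, alg_rel E D (ys o)) ->
  exists N, exists2 z : {ffun Y -> 'I_N.+1} -> int, (exists b, z b != 0) &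
    \sum_(b : {ffun Y -> 'I_N.+1}) (\prod_o ys o ^+ b o) *~ z b = 0.
Proof.
move=> kY ys_alg; have [E [D ys_algED]] := alg_rel_uniform ys_alg.
set nY := #|Y|; set B := (nY * D)%N; set N := ((nY * E).+1 ^ k * B.+1 ^ nY)%N.
set A := (nY * (E * N))%N.
have [c c0 c_span] := mspan_scaled_products N ys_algED (enum Y).
rewrite -cardE -/nY in c_span.
pose I := {ffun Y -> 'I_N.+1}.
pose J : finType := ({ffun 'I_k -> 'I_A.+1} * {ffun Y -> 'I_B.+1})%type.
pose w (j : J) := monomial (fun i => j.1 i : nat) (fun o => j.2 o : nat).
have coords (b : I) : exists lam : J -> rat, c * \prod_o ys o ^+ b o = \sum_j ratr (lam j) * w j.
  apply: (qspan_coords (M := bounded_monomial A (fun=> B))).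
    move=> _ [e [bb [he hb ->]]].
    exists ([ffun i => inord (e i)], [ffun o => inord (bb o)]).
    rewrite /w /monomial /=; congr (_ * _); apply: eq_bigr => i _.
      by rewrite ffunE inordK // ltnS.
    by rewrite ffunE inordK // ltnS.
  have := c_span (fun o => b o : nat) (fun o => ltnSE (ltn_ord (b o))); rewrite big_enum /=.
  by have -> : \prod_(o in Y) ys o ^+ b o = \prod_o ys o ^+ b o
    by apply: eq_bigl => o; rewrite inE.
have [lam lam_coords] := fin_all_exists coords.
have card : (#|J| < #|I|)%N.
  by rewrite card_prod !card_ffun !card_ord; apply: monomial_count_lt.
have [mu mu0 mu_rel] := qrelation_of_card_lt lam_coords card.
have /eqP : c * \sum_(b : I) ratr (mu b) * \prod_o ys o ^+ b o = 0.
  by rewrite -[RHS]mu_rel mulr_sumr; apply: eq_bigr => b _ /=; ring.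
rewrite mulf_eq0 (negbTE c0) /= => /eqP murel.
by exists N; apply: zrelation_of_qrelation mu0 murel.
Qed.

End MonomialSpan.

Section TranscendenceBasis.
Variables (R : realType) (k : nat) (tp : 'I_k -> R[i]) (Y : finType) (ys : Y -> R[i]).
Local Notation C := R[i].

Lemma qeval_mspan (a : {mpoly rat[k]}) : mspan tp ys (msize a) (fun=> 0%N) (qeval tp a).
Proof.
rewrite /qeval /mmap; apply: qspan_sum => m ms; apply/qspanZ/qspan_gen.
exists (fun j => m j), (fun=> 0%N); split=> //.
  move=> j; apply/ltnW/(leq_ltn_trans _ (msize_mdeg_lt ms)).
  by rewrite mdegE (bigD1 j) //= leq_addr.
by rewrite /monomial /mmap1 [X in _ * X]big1 ?mulr1 // => o _; rewrite expr0.
Qed.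

Lemma Qfield_poly_mspan (P : {poly C}) : (forall i, Qfield tp P`_i) ->
  exists2 d : C, d != 0 & exists E, forall i, mspan tp ys E (fun=> 0%N) (d * P`_i).
Proof.
move=> QP; suff [d d0 [E [_ dE]]] : exists2 d : C, d != 0 & exists E,
    mspan tp ys E (fun=> 0%N) d /\
    forall i, (i < size P)%N -> mspan tp ys E (fun=> 0%N) (d * P`_i).
  exists d => //; exists E => i; have [/dE // | ge] := ltnP i (size P).
  by rewrite nth_default // mulr0; apply: qspan0.
elim: (size P) => [|n [d d0 [E [Ed dE]]]].
  by exists 1; [exact: oner_neq0 | exists 0%N; split=> //; apply: mspan1].
have [a [b [b0 Pn]]] := QP n.
set E' := (E + maxn (msize a) (msize b))%N.
have mspanE' z e : (e <= maxn (msize a) (msize b))%N ->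
    mspan tp ys (E + e) (fun=> 0%N) z -> mspan tp ys E' (fun=> 0%N) z.
  by move=> le; apply: mspanW => //; rewrite leq_add2l.
exists (d * qeval tp b); first by rewrite mulf_neq0.
exists E'; split; first exact: mspanE' (leq_maxr _ _) (mspanM Ed (qeval_mspan b)).
move=> i; rewrite ltnS leq_eqVlt => /orP [/eqP -> | lt_in].
  have -> : d * qeval tp b * P`_n = d * qeval tp a by rewrite Pn; field.
  exact: mspanE' (leq_maxl _ _) (mspanM Ed (qeval_mspan a)).
rewrite mulrAC; exact: mspanE' (leq_maxr _ _) (mspanM (dE i lt_in) (qeval_mspan b)).
Qed.

Lemma algebraic_alg_rel y : algebraic_over tp y -> exists E D, alg_rel tp ys E D y.
Proof.
move=> [P [P0 [QP rP]]]; have [d d0 [E dP]] := Qfield_poly_mspan QP.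
exists E, (size P), (d *: P); split.
- by rewrite scale_poly_eq0 negb_or d0.
- by rewrite /root hornerZ (eqP rP) mulr0.
- by rewrite size_scale // ltnW.
- by move=> i; rewrite coefZ.
Qed.

End TranscendenceBasis.

Section IndependentMonomials.
Variables (R : realType) (k : nat) (t : 'I_k -> R[i]).
Local Notation C := R[i].

Definition t_monomial (g : C) := exists e : 'I_k -> nat, g = \prod_i t i ^+ e i.

Lemma t_monomial1 : t_monomial 1.
Proof. by exists (fun=> 0%N); rewrite big1 // => i _; rewrite expr0. Qed.

Lemma t_monomialM g g' : t_monomial g -> t_monomial g' -> t_monomial (g * g').
Proof.
move=> [e ->] [e' ->]; exists (fun j => e j + e' j)%N.
by rewrite -big_split; apply: eq_bigr => j _; rewrite exprD.
Qed.

Hypothesis ht : alg_indep t.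

Lemma alg_indep_neq0 i : t i != 0.
Proof.
apply/eqP => ti0; have := @ht 'X_i; rewrite /qeval mmapX mmap1U ti0 => /(_ erefl).
by move/(congr1 (mcoeff U_(i))); rewrite mcoeffXU eqxx raddf0 => /eqP; rewrite oner_eq0.
Qed.

Lemma t_monomial_neq0 g : t_monomial g -> g != 0.
Proof.
by move=> [e ->]; rewrite prodf_seq_neq0; apply/allP => i _; apply/expf_neq0/alg_indep_neq0.
Qed.

Lemma alg_indep_monomials (I : finType) (P : pred I) (e : I -> 'I_k -> nat) (z : I -> int) :
  {in P &, forall i i', e i =1 e i' -> i = i'} -> (exists2 i, P i & z i != 0) ->
  \sum_(i | P i) (\prod_j t j ^+ e i j) *~ z i != 0.
Proof.
move=> inj_e [i0 Pi0 zi0]; pose m i : 'X_{1..k} := [multinom e i j | j < k].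
pose Phi : {mpoly rat[k]} := \sum_(i | P i) (z i)%:~R *: 'X_[m i].
have -> : \sum_(i | P i) (\prod_j t j ^+ e i j) *~ z i = qeval t Phi.
  rewrite /qeval raddf_sum; apply: eq_bigr => i _ /=; rewrite mmapZ mmapX rmorph_int mulrzl.
  by congr (_ *~ _); apply: eq_bigr => j _; rewrite mnmE.
apply/eqP => /ht /(congr1 (mcoeff (m i0))); rewrite raddf_sum raddf0 (bigD1 i0) //=.
rewrite mcoeffZ mcoeffX eqxx mulr1 big1 ?addr0 => [/eqP|i /andP [Pi ne]].
  by rewrite intr_eq0 (negbTE zi0).
rewrite mcoeffZ mcoeffX; case: eqP => [mi | _]; last by rewrite mulr0.
suff ii0 : i = i0 by rewrite ii0 eqxx in ne.
apply: (inj_e i i0 Pi Pi0) => j; have := congr1 (fun mm : 'X_{1..k} => mm j) mi.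
by rewrite /m !mnmE.
Qed.

Definition adjoin (x : C) (i : 'I_k.+1) : C := if unlift ord0 i is Some j then t j else x.

Lemma prod_adjoin x (b : 'I_k.+1 -> nat) :
  \prod_i adjoin x i ^+ b i = x ^+ b ord0 * \prod_j t j ^+ b (lift ord0 j).
Proof.
rewrite big_ord_recl /adjoin unlift_none; congr (_ * _); apply: eq_bigr => j _.
by rewrite liftK.
Qed.

Lemma int_relation_poly x N (z : {ffun 'I_k.+1 -> 'I_N.+1} -> int) :
  (exists b, z b != 0) ->
  \sum_(b : {ffun 'I_k.+1 -> 'I_N.+1}) (\prod_i adjoin x i ^+ b i) *~ z b = 0 ->
  exists p : {poly C}, p != 0 /\ (forall i, zspan t_monomial p`_i) /\ root p x.
Proof.
move=> [b0 zb0] xrel; pose I := {ffun 'I_k.+1 -> 'I_N.+1}.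
pose tm (b : I) := \prod_j t j ^+ b (lift ord0 j).
pose p := \sum_(b : I) (tm b *~ z b)%:P * 'X^(b ord0).
have coef_p l : p`_l = \sum_(b : I | (b ord0 : nat) == l) tm b *~ z b.
  rewrite coef_sum [RHS]big_mkcond; apply: eq_bigr => b _; rewrite coefCM coefXn eq_sym.
  by case: eqP; rewrite ?mulr1 ?mulr0.
exists p; split; [|split].
- apply/eqP => /(congr1 (fun q : {poly C} => q`_(b0 ord0))) /eqP.
  rewrite coef_p coef0; apply/negP.
  apply: (alg_indep_monomials (P := fun b : I => (b ord0 : nat) == b0 ord0)
    (e := fun b j => b (lift ord0 j) : nat)); last by exists b0.
  move=> b b' /eqP Pb /eqP Pb' eqbb'; apply/ffunP => i; apply/val_inj.
  by case: (unliftP ord0 i) => [j -> | ->]; [exact: eqbb' | exact: etrans Pb (esym Pb')].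
- move=> l; rewrite coef_p.
  exists [seq (z b, tm b) | b : I <- enum I & (b ord0 : nat) == l]; split.
    by move=> _ /mapP [b _ ->]; exists (fun j => b (lift ord0 j) : nat).
  by rewrite big_map big_filter big_enum_cond.
- rewrite /root /p horner_sum; apply/eqP; rewrite -[RHS]xrel; apply: eq_bigr => b _.
  by rewrite hornerCM hornerXn prod_adjoin mulrzAl mulrC.
Qed.

Lemma subring_root_t_monomial (S : C -> Prop) y : is_subring S ->
  trdeg_eq (frac_field S) k -> (forall i, S (t i)) -> S y ->
  exists p : {poly C}, p != 0 /\ (forall i, zspan t_monomial p`_i) /\ root p y.
Proof.
move=> hS [tp [_ [_ alg_tp]]] St Sy.
have alg_rel_adjoin i : exists E D, alg_rel tp (adjoin y) E D (adjoin y i).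
  apply/algebraic_alg_rel/alg_tp/(subring_frac_field hS).
  by rewrite /adjoin; case: unlift => [j|]; [apply: St |].
have kY : (k < #|'I_k.+1|)%N by rewrite card_ord.
have [N [z z0 zrel]] := ys_int_relation kY alg_rel_adjoin.
exact: int_relation_poly z0 zrel.
Qed.

End IndependentMonomials.

Theorem lemma4p1 (R : realType) (S : R[i] -> Prop) (k : nat) (t : 'I_k -> R[i])
    (f : R[i] -> R[i]) :
  is_subring S ->
  trdeg_eq (frac_field S) k ->
  (forall i, S (t i)) ->
  alg_indep t ->
  (forall x y, S x -> S y -> f (x + y) = f x + f y) ->
  gen_poly_on_units S (fun x => f x / x) ->
  (forall e : 'I_k -> nat, f (\prod_(i < k) t i ^+ e i) = 0) ->
  forall x, S x -> f x = 0.
Proof.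
move=> hS htr St ht hf [m hq] hG.
have GS g : t_monomial t g -> S g.
  by move=> [e ->]; apply: (subring_prod hS) => i; apply/(subringX hS)/St.
apply: (gen_poly_additive_vanishes hS (t_monomial1 t) (@t_monomialM _ _ t) GS
  (t_monomial_neq0 ht) _ hf hq); last by move=> g [e ->].
move=> g hg hd hGg x Sx; apply: (derivation_vanishes_int_roots hS hg hd GS hGg Sx).
by have [p ?] := subring_root_t_monomial ht hS htr St Sx; exists p.
Qed.
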